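(* For every MSO-formula $\phi(Y)$ (over graphs, with one free set variable $Y$) there exists an MSO-formula $\phi^*(x_1,x_2,Y)$ such that for all graphs $G$, all edge sets $F\subseteq E^G$ and all distinct edges $e_1,e_2\in E^G\setminus F$ we have \[ G\models\phi^*(e_1,e_2,F)\iff G^{e_1\times e_2}\models\phi(F). \]
   Context: Graphs are finite, undirected, loop-free, and may have multiple edges. A graph $G$ is viewed as a relational structure with universe $U^G:=V^G\cup E^G$, unary relations $V$ (vertices) and $E$ (edges), and binary incidence relation $I$ where $Ixy$ holds iff $x$ is a vertex and $y$ an edge with endpoint $x$. Monadic second-order logic (MSO) over graphs has individual variables (ranging over elements of $U^G$) and set variables (ranging over subsets of $U^G$); atomic formulas are $Vx$, $Ex$, $Ixy$, $Xx$ (and equality $x=y$), and formulas are closed under $\neg,\wedge,\vee,\to$ and existential/universal quantification over individual and set variables, with the usual semantics. $G\models\phi(a_1,\dots,A_1,\dots)$ means $G$ satisfies $\phi$ when the free variables are interpreted by the given elements and sets. For a graph $G$ and distinct edges $e_1,e_2\in E^G$, $G^{e_1\times e_2}$ is the graph obtained from $G$ by deleting $e_1$ and $e_2$, adding a new vertex $x$, and adding four edges joining $x$ to the endpoints of $e_1$ and to the endpoints of $e_2$. (If $F\subseteq E^G\setminus\{e_1,e_2\}$, then $F$ is also a set of edges of $G^{e_1\times e_2}$.) *)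

From mathcomp Require Import all_boot.
Set Implicit Arguments. Unset Strict Implicit. Unset Printing Implicit Defensive.

(* Finite, loop-free multigraphs: a finite vertex type, a finite edge type,
   and for each edge an (ordered, but only used symmetrically) pair of
   distinct endpoints. *)
Record graph := Graph {
  gV : finType;
  gE : finType;
  ends : gE -> (gV * gV)%type;
  ends_loopfree : forall e, (ends e).1 != (ends e).2 }.

Definition univ (G : graph) : finType := (gV G + gE G)%type.

Definition isV (G : graph) (u : univ G) : bool :=
  if u is inl _ then true else false.
Definition isE (G : graph) (u : univ G) : bool :=
  if u is inr _ then true else false.
Definition inc (G : graph) (x y : univ G) : bool :=
  match x, y with
  | inl v, inr e => (v == (ends e).1) || (v == (ends e).2)
  | _, _ => false
  end.

(* MSO syntax: individual variables and set variables are indexed by nat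
   (two separate namespaces). *)
Inductive form : Type :=
  | FV   of nat
  | FE   of nat
  | FI   of nat & nat
  | FIn  of nat & nat
  | FEq  of nat & nat
  | FNeg of form
  | FAnd of form & form
  | FOr  of form & form
  | FImp of form & form
  | FEx  of nat & form
  | FAll of nat & form
  | FExS of nat & form
  | FAllS of nat & form.

Fixpoint ifree (n : nat) (f : form) : bool :=
  match f with
  | FV x | FE x => x == n
  | FI x y | FEq x y => (x == n) || (y == n)
  | FIn x _ => x == n
  | FNeg g => ifree n g
  | FAnd g h | FOr g h | FImp g h => ifree n g || ifree n h
  | FEx x g | FAll x g => (x != n) && ifree n g
  | FExS _ g | FAllS _ g => ifree n g
  end.

Fixpoint sfree (n : nat) (f : form) : bool :=
  match f with
  | FV _ | FE _ | FI _ _ | FEq _ _ => false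
  | FIn _ X => X == n
  | FNeg g => sfree n g
  | FAnd g h | FOr g h | FImp g h => sfree n g || sfree n h
  | FEx _ g | FAll _ g => sfree n g
  | FExS X g | FAllS X g => (X != n) && sfree n g
  end.

Definition upd (T : Type) (s : nat -> T) (n : nat) (a : T) : nat -> T :=
  fun m => if m == n then a else s m.

Fixpoint sat (G : graph) (ia : nat -> univ G) (sa : nat -> {set univ G})
    (f : form) : Prop :=
  match f with
  | FV x => isV (ia x)
  | FE x => isE (ia x)
  | FI x y => inc (ia x) (ia y)
  | FIn x X => ia x \in sa X
  | FEq x y => ia x = ia y
  | FNeg g => ~ sat ia sa g
  | FAnd g h => sat ia sa g /\ sat ia sa h
  | FOr g h => sat ia sa g \/ sat ia sa h
  | FImp g h => sat ia sa g -> sat ia sa h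
  | FEx x g => exists u : univ G, sat (upd ia x u) sa g
  | FAll x g => forall u : univ G, sat (upd ia x u) sa g
  | FExS X g => exists A : {set univ G}, sat ia (upd sa X A) g
  | FAllS X g => forall A : {set univ G}, sat ia (upd sa X A) g
  end.

(* The graph G^{e1 x e2}: vertices option V (None is the new vertex x);
   edges: the old edges other than e1, e2, plus four new edges
   x--(ends e1).1, x--(ends e1).2, x--(ends e2).1, x--(ends e2).2. *)
Section Splice.
Variables (G : graph) (e1 e2 : gE G).

Definition kept_edge : finType := {e : gE G | (e != e1) && (e != e2)}.
Definition splice_E : finType := (kept_edge + 'I_4)%type.
Definition splice_V : finType := option (gV G).

Definition new_end (i : 'I_4) : gV G :=
  match val i with
  | 0 => (ends e1).1
  | 1 => (ends e1).2
  | 2 => (ends e2).1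
  | _ => (ends e2).2
  end.

Definition splice_ends (e : splice_E) : (splice_V * splice_V)%type :=
  match e with
  | inl k => (Some (ends (val k)).1, Some (ends (val k)).2)
  | inr i => (None, Some (new_end i))
  end.

Lemma splice_loopfree e : (splice_ends e).1 != (splice_ends e).2.
Proof.
case: e => [k|i] //=.
by rewrite (inj_eq (@Some_inj _)) ends_loopfree.
Qed.

Definition splice : graph := @Graph splice_V splice_E splice_ends splice_loopfree.

Definition lift_edges (F : {set gE G}) : {set gE splice} :=
  [set e : splice_E | if e is inl k then val k \in F else false].
End Splice.

Definition edge_set (G : graph) (F : {set gE G}) : {set univ G} :=
  [set (inr e : univ G) | e in F].

From HB Require Import structures.
From mathcomp Require Import all_boot zify.

Set Implicit Arguments. Unset Strict Implicit. Unset Printing Implicit Defensive.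

(* G^{e1 x e2} is MSO-interpretable in G with parameters e1, e2.  Every element
   of the spliced graph is named by a pair (k, u) of a kind k and an element u
   of G: an old vertex or kept edge by itself, the new vertex by e1, and the new
   edge from the new vertex to an endpoint v of e_i by v.  Each kind is carved
   out of G by a formula in the parameters ([guard]), and the vertex, edge,
   incidence, equality and Y-membership relations of the spliced graph, read
   through these names, are quantifier-free definable in G.  A set of the
   spliced graph is coded by one set of G per kind.  Hence phi* arises from phi
   by splitting every quantifier into four relativised ones and replacing each
   atom by its definition. *)

Inductive kind := Old | Hub | Arm1 | Arm2.

Definition kind_index (k : kind) : nat :=
  match k with Old => 0 | Hub => 1 | Arm1 => 2 | Arm2 => 3 end.

Lemma kind_index_inj : injective kind_index. Proof. by do 2!case. Qed.

HB.instance Definition _ := Equality.copy kind (inj_type kind_index_inj).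

(* The successor keeps the codes of set variables away from the parameter 0. *)
Definition svar (X : nat) (k : kind) : nat := (4 * X + kind_index k).+1.

Lemma svar_eq X Y k l : (svar X k == svar Y l) = (X == Y) && (k == l).
Proof.
apply/eqP/andP => [|[/eqP-> /eqP->] //].
have lt4 (j : kind) : kind_index j < 4 by case: j.
move: (lt4 k) (lt4 l); rewrite /svar => ltk ltl [E].
have -> : X = Y by lia.
by split=> //; apply/eqP/kind_index_inj; lia.
Qed.

Definition Ftrue : form := FEq 0 0.
Definition Ffalse : form := FNeg Ftrue.

Definition FOr_kinds (f : kind -> form) : form :=
  FOr (FOr (f Old) (f Hub)) (FOr (f Arm1) (f Arm2)).
Definition FAnd_kinds (f : kind -> form) : form :=
  FAnd (FAnd (f Old) (f Hub)) (FAnd (f Arm1) (f Arm2)).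

Definition guard (k : kind) (y : nat) : form :=
  match k with
  | Old => FAnd (FNeg (FEq y 0)) (FNeg (FEq y 1))
  | Hub => FEq y 0
  | Arm1 => FI y 0
  | Arm2 => FI y 1
  end.

Definition FEx_kinds (x : nat) (f : kind -> form) : form :=
  FOr_kinds (fun k => FEx x (FAnd (guard k x) (f k))).
Definition FAll_kinds (x : nat) (f : kind -> form) : form :=
  FAnd_kinds (fun k => FAll x (FImp (guard k x) (f k))).

Definition FExS_kinds (X : nat) (f : form) : form :=
  FExS (svar X Old) (FExS (svar X Hub) (FExS (svar X Arm1) (FExS (svar X Arm2) f))).
Definition FAllS_kinds (X : nat) (f : form) : form :=
  FAllS (svar X Old) (FAllS (svar X Hub) (FAllS (svar X Arm1) (FAllS (svar X Arm2) f))).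

Definition atomV (k : kind) (y : nat) : form :=
  match k with Old => FV y | Hub => Ftrue | _ => Ffalse end.
Definition atomE (k : kind) (y : nat) : form :=
  match k with Old => FE y | Hub => Ffalse | _ => Ftrue end.
Definition atomI (k l : kind) (y z : nat) : form :=
  match k, l with
  | Old, Old => FI y z
  | Old, (Arm1 | Arm2) => FEq y z
  | Hub, (Arm1 | Arm2) => Ftrue
  | _, _ => Ffalse
  end.
Definition atomEq (k l : kind) (y z : nat) : form :=
  if k == l then FEq y z else Ffalse.
Definition atomY (k : kind) (y : nat) : form :=
  if k == Old then FIn y 0 else Ffalse.

(* Individual variable x of phi becomes x.+2, of kind ki x; 0 and 1 hold e1, e2.
   A set variable X with coded X is bound and coded by the svar X k; otherwise
   it is the parameter Y, read off set variable 0. *)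
Fixpoint backtr (ki : nat -> kind) (coded : nat -> bool) (f : form) : form :=
  match f with
  | FV x => atomV (ki x) x.+2
  | FE x => atomE (ki x) x.+2
  | FI x y => atomI (ki x) (ki y) x.+2 y.+2
  | FEq x y => atomEq (ki x) (ki y) x.+2 y.+2
  | FIn x X => if coded X then FIn x.+2 (svar X (ki x)) else atomY (ki x) x.+2
  | FNeg g => FNeg (backtr ki coded g)
  | FAnd g h => FAnd (backtr ki coded g) (backtr ki coded h)
  | FOr g h => FOr (backtr ki coded g) (backtr ki coded h)
  | FImp g h => FImp (backtr ki coded g) (backtr ki coded h)
  | FEx x g => FEx_kinds x.+2 (fun k => backtr (upd ki x k) coded g)
  | FAll x g => FAll_kinds x.+2 (fun k => backtr (upd ki x k) coded g)
  | FExS X g => FExS_kinds X (backtr ki (upd coded X true) g)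
  | FAllS X g => FAllS_kinds X (backtr ki (upd coded X true) g)
  end.

Lemma ifree_guard n k y : ifree n (guard k y) -> n = y \/ n <= 1.
Proof. by case: k => /=; lia. Qed.

Lemma ifree_FEx_kinds n x f :
  ifree n (FEx_kinds x f) -> x != n /\ (n <= 1 \/ exists k, ifree n (f k)).
Proof.
have step k : (x != n) && (ifree n (guard k x) || ifree n (f k)) ->
    x != n /\ (n <= 1 \/ exists k, ifree n (f k)).
  case/andP=> xn /orP[/ifree_guard|fk]; last by split=> //; right; exists k.
  by case=> [En|]; [rewrite En eqxx in xn | split=> //; left].
by move=> /orP[/orP[]|/orP[]] /step.
Qed.

Lemma ifree_FAll_kinds n x f :
  ifree n (FAll_kinds x f) -> x != n /\ (n <= 1 \/ exists k, ifree n (f k)).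
Proof. exact: ifree_FEx_kinds. Qed.

Lemma ifree_backtr f ki coded n : ifree n (backtr ki coded f) -> n <= 1 \/ ifree n.-2 f.
Proof.
elim: f ki coded
  => [x|x|x y|x X|x y|g IH|g IHg h IHh|g IHg h IHh|g IHg h IHh|x g IH|x g IH|X g IH|X g IH]
  ki coded.
- by rewrite /=; case: (ki x) => /=; lia.
- by rewrite /=; case: (ki x) => /=; lia.
- by rewrite /=; case: (ki x) (ki y) => [] [] /=; lia.
- by rewrite /= /atomY; case: (coded X); case: (ki x == Old) => /=; lia.
- by rewrite /= /atomEq; case: (ki x == ki y) => /=; lia.
- exact: IH.
- by rewrite /=; case/orP=> [/IHg|/IHh] [|->]; rewrite ?orbT; auto.
- by rewrite /=; case/orP=> [/IHg|/IHh] [|->]; rewrite ?orbT; auto.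
- by rewrite /=; case/orP=> [/IHg|/IHh] [|->]; rewrite ?orbT; auto.
- case/ifree_FEx_kinds=> xn [->|[k /IH[->|gn]]]; auto.
  by have [|n2] := leqP n 1; [left | right; rewrite /= gn andbT; lia].
- case/ifree_FAll_kinds=> xn [->|[k /IH[->|gn]]]; auto.
  by have [|n2] := leqP n 1; [left | right; rewrite /= gn andbT; lia].
- exact: IH.
- exact: IH.
Qed.

Lemma sfree_FEx_kinds n x f : sfree n (FEx_kinds x f) -> exists k, sfree n (f k).
Proof.
by rewrite /= => /orP[/orP[]|/orP[]]; eexists; eassumption.
Qed.

Lemma sfree_FAll_kinds n x f : sfree n (FAll_kinds x f) -> exists k, sfree n (f k).
Proof. exact: sfree_FEx_kinds. Qed.

Lemma sfree_FExS_kinds n X f :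
  sfree n (FExS_kinds X f) -> (forall k, svar X k != n) /\ sfree n f.
Proof. by case/and5P=> ? ? ? ? ?; split=> // [[]]. Qed.

Lemma sfree_FAllS_kinds n X f :
  sfree n (FAllS_kinds X f) -> (forall k, svar X k != n) /\ sfree n f.
Proof. exact: sfree_FExS_kinds. Qed.

Lemma sfree_backtr f ki coded n : sfree n (backtr ki coded f) ->
  n = 0 \/ exists X k, [/\ sfree X f, coded X & n = svar X k].
Proof.
elim: f ki coded
  => [x|x|x y|x X|x y|g IH|g IHg h IHh|g IHg h IHh|g IHg h IHh|x g IH|x g IH|X g IH|X g IH]
  ki coded.
- by rewrite /=; case: (ki x).
- by rewrite /=; case: (ki x).
- by rewrite /=; case: (ki x) (ki y) => [] [].
- rewrite /= /atomY; case cX: (coded X) => /=.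
    by move/eqP=> <-; right; exists X, (ki x); rewrite eqxx.
  by case: (ki x == Old) => //= /eqP <-; left.
- by rewrite /= /atomEq; case: (_ == _).
- exact: IH.
- by rewrite /=; case/orP=> [/IHg|/IHh] [->|[Y [k [HY cY ->]]]]; auto;
    right; exists Y, k; rewrite HY ?orbT.
- by rewrite /=; case/orP=> [/IHg|/IHh] [->|[Y [k [HY cY ->]]]]; auto;
    right; exists Y, k; rewrite HY ?orbT.
- by rewrite /=; case/orP=> [/IHg|/IHh] [->|[Y [k [HY cY ->]]]]; auto;
    right; exists Y, k; rewrite HY ?orbT.
- by case/sfree_FEx_kinds=> k /IH.
- by case/sfree_FAll_kinds=> k /IH.
- case/sfree_FExS_kinds=> Xn /IH[->|[Y [k [HY cY En]]]]; first by left.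
  have YX : (Y == X) = false by apply: contraNF (Xn k); rewrite En => /eqP->.
  by right; exists Y, k; rewrite /= eq_sym YX HY; rewrite /upd YX in cY.
- case/sfree_FAllS_kinds=> Xn /IH[->|[Y [k [HY cY En]]]]; first by left.
  have YX : (Y == X) = false by apply: contraNF (Xn k); rewrite En => /eqP->.
  by right; exists Y, k; rewrite /= eq_sym YX HY; rewrite /upd YX in cY.
Qed.

Section KindedQuantifiers.
Variables (G : graph) (ia : nat -> univ G) (sa : nat -> {set univ G}).

Lemma sat_FOr_kinds f : sat ia sa (FOr_kinds f) <-> exists k, sat ia sa (f k).
Proof.
split=> [|[[] fk]] /=; try tauto.
by case=> [[]|[]] fk; eexists; exact: fk.
Qed.

Lemma sat_FAnd_kinds f : sat ia sa (FAnd_kinds f) <-> forall k, sat ia sa (f k).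
Proof. by split=> [[[? ?] [? ?]] []|fk] //=; do !split; apply: fk. Qed.

Definition upd_kinds (X : nat) (Xs : kind -> {set univ G}) : nat -> {set univ G} :=
  upd (upd (upd (upd sa (svar X Old) (Xs Old)) (svar X Hub) (Xs Hub))
          (svar X Arm1) (Xs Arm1)) (svar X Arm2) (Xs Arm2).

Lemma upd_kinds_svar X Xs Y k :
  upd_kinds X Xs (svar Y k) = if Y == X then Xs k else sa (svar Y k).
Proof. by rewrite /upd_kinds /upd !svar_eq; case: (Y == X); case: k. Qed.

Lemma sat_FExS_kinds X f :
  sat ia sa (FExS_kinds X f) <-> exists Xs, sat ia (upd_kinds X Xs) f.
Proof.
split=> [[A [B [C [D H]]]]|[Xs H]]; last by exists (Xs Old), (Xs Hub), (Xs Arm1), (Xs Arm2).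
by exists (fun k => match k with Old => A | Hub => B | Arm1 => C | Arm2 => D end).
Qed.

Lemma sat_FAllS_kinds X f :
  sat ia sa (FAllS_kinds X f) <-> forall Xs, sat ia (upd_kinds X Xs) f.
Proof.
split=> [H Xs|H A B C D]; first exact: H.
exact: (H (fun k => match k with Old => A | Hub => B | Arm1 => C | Arm2 => D end)).
Qed.

End KindedQuantifiers.

Lemma mem_edge_set (H : graph) (A : {set gE H}) (x : univ H) :
  (x \in edge_set A) = (if x is inr e then e \in A else false).
Proof.
case: x => [v|e]; rewrite /edge_set.
  by apply/imsetP => -[e _].
by apply/imsetP/idP => [[e' He [->]] //|He]; exists e.
Qed.

Section SpliceInterpretation.
Variables (G : graph) (e1 e2 : gE G) (F : {set gE G}).
Local Notation S := (splice e1 e2).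

Definition valid (k : kind) (u : univ G) : bool :=
  match k with
  | Old => (u != inr e1) && (u != inr e2)
  | Hub => u == inr e1
  | Arm1 => inc u (inr e1)
  | Arm2 => inc u (inr e2)
  end.

Definition arm_kind (i : 'I_4) : kind := if i < 2 then Arm1 else Arm2.

(* Only meaningful on valid pairs; elsewhere it returns the junk value inl None. *)
Definition decode (k : kind) (u : univ G) : univ S :=
  match k, u with
  | Old, inl v => inl (Some v)
  | Old, inr e => if insub e is Some k then inr (inl k) else inl None
  | Arm1, inl v => inr (inr (if v == (ends e1).1 then ord0 else Ordinal (isT : 1 < 4)))
  | Arm2, inl v =>
      inr (inr (if v == (ends e2).1 then Ordinal (isT : 2 < 4) else Ordinal (isT : 3 < 4)))
  | _, _ => inl None
  end.

Definition code (u' : univ S) : kind * univ G :=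
  match u' with
  | inl (Some v) => (Old, inl v)
  | inl None => (Hub, inr e1)
  | inr (inl k) => (Old, inr (val k))
  | inr (inr i) => (arm_kind i, inl (new_end e1 e2 i))
  end.

Variant valid_spec : kind -> univ G -> univ S -> Prop :=
  | ValidVertex v : valid_spec Old (inl v) (inl (Some v))
  | ValidEdge (k : kept_edge e1 e2) : valid_spec Old (inr (val k)) (inr (inl k))
  | ValidHub : valid_spec Hub (inr e1) (inl None)
  | ValidArm (i : 'I_4) : valid_spec (arm_kind i) (inl (new_end e1 e2 i)) (inr (inr i)).

Lemma validP k u : valid k u -> valid_spec k u (decode k u).
Proof.
case: k u => [] [v|e] //=.
- by move=> _; apply: ValidVertex.
- by move=> ke; rewrite insubT; apply: (ValidEdge (Sub e ke)).
- by move/eqP=> ->; apply: ValidHub.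
- case/orP=> /eqP->; rewrite ?eqxx; first exact: (ValidArm ord0).
  by rewrite eq_sym (negbTE (ends_loopfree e1)); apply: (ValidArm (Ordinal (isT : 1 < 4))).
- case/orP=> /eqP->; rewrite ?eqxx; first exact: (ValidArm (Ordinal (isT : 2 < 4))).
  by rewrite eq_sym (negbTE (ends_loopfree e2)); apply: (ValidArm (Ordinal (isT : 3 < 4))).
Qed.

Lemma decodeK k u : valid k u -> code (decode k u) = (k, u).
Proof. by case/validP. Qed.

Lemma valid_code u' : valid (code u').1 (code u').2.
Proof.
case: u' => [[v|]|[k|[[|[|[|[|//]]]] i4]]] //=; rewrite ?eqxx ?orbT //.
by case/andP: (valP k) => ??; apply/andP.
Qed.

Lemma codeK u' : decode (code u').1 (code u').2 = u'.
Proof.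
case: u' => [[v|]|[k|[[|[|[|[|//]]]] i4]]] //=; first by rewrite valK.
all: rewrite ?eqxx ?(eq_sym (ends _).2) ?(negbTE (ends_loopfree _)).
all: by congr (inr (inr _)); apply: val_inj.
Qed.

Lemma decode_inj k l u w :
  valid k u -> valid l w -> decode k u = decode l w -> k = l /\ u = w.
Proof. by move=> /decodeK ku /decodeK lw /(congr1 code); rewrite ku lw => -[]. Qed.

Section Atoms.
Variables (ia : nat -> univ G) (sa : nat -> {set univ G}).

Lemma sat_atomV k y : valid k (ia y) -> sat ia sa (atomV k y) <-> isV (decode k (ia y)).
Proof.
move Eu: (ia y) => u Hu; case/validP: Hu Eu => [v|e||i] Eu;
  by rewrite /arm_kind; repeat case: ifP => _; rewrite /= ?Eu; split.
Qed.

Lemma sat_atomE k y : valid k (ia y) -> sat ia sa (atomE k y) <-> isE (decode k (ia y)).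
Proof.
move Eu: (ia y) => u Hu; case/validP: Hu Eu => [v|e||i] Eu;
  by rewrite /arm_kind; repeat case: ifP => _; rewrite /= ?Eu; split.
Qed.

Lemma sat_atomI k l y z : valid k (ia y) -> valid l (ia z) ->
  sat ia sa (atomI k l y z) <-> inc (decode k (ia y)) (decode l (ia z)).
Proof.
move Eu: (ia y) => u Hu; move Ew: (ia z) => w Hw.
case/validP: Hu Eu => [v|e||i] Eu; case/validP: Hw Ew => [v'|e'||i'] Ew;
    rewrite /arm_kind; repeat case: ifP => _; rewrite /= ?Eu ?Ew; try by split.
all: by split=> [[->]|/eqP[->]].
Qed.

Lemma sat_atomEq k l y z : valid k (ia y) -> valid l (ia z) ->
  sat ia sa (atomEq k l y z) <-> decode k (ia y) = decode l (ia z).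
Proof.
move=> Hy Hz; rewrite /atomEq; case: eqP => kl /=.
  by subst l; split=> [->|/(decode_inj Hy Hz)[]].
by split=> [/(_ erefl)[]|/(decode_inj Hy Hz)[]].
Qed.

Lemma sat_atomY k y : sa 0 = edge_set F -> valid k (ia y) ->
  sat ia sa (atomY k y) <-> decode k (ia y) \in edge_set (lift_edges e1 e2 F).
Proof.
move=> sa0; move Eu: (ia y) => u Hu; case/validP: Hu Eu => [v|e||i] Eu;
  rewrite /atomY /arm_kind; repeat case: ifP => _.
all: by rewrite /= ?Eu ?sa0 (@mem_edge_set S) ?mem_edge_set ?inE; split.
Qed.

Lemma sat_guard k y : ia 0 = inr e1 -> ia 1 = inr e2 ->
  sat ia sa (guard k y) <-> valid k (ia y).
Proof.
move=> ia0 ia1; case: k => /=; rewrite ?ia0 ?ia1; try by split.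
  by split=> [[/eqP n1 /eqP n2]|/andP[/eqP n1 /eqP n2]]; [apply/andP|].
by split=> [->|/eqP].
Qed.

End Atoms.

Lemma sat_FEx_kinds ia sa x f : ia 0 = inr e1 -> ia 1 = inr e2 ->
  sat ia sa (FEx_kinds x.+2 f) <-> exists k u, valid k u /\ sat (upd ia x.+2 u) sa (f k).
Proof.
move=> ia0 ia1; have gk k u : sat (upd ia x.+2 u) sa (guard k x.+2) <-> valid k u.
  by rewrite (@sat_guard (upd ia x.+2 u) sa k x.+2 ia0 ia1) /upd eqxx.
rewrite sat_FOr_kinds; split=> [[k [u [/gk ku fk]]]|[k [u [/gk ku fk]]]]; by exists k, u.
Qed.

Lemma sat_FAll_kinds ia sa x f : ia 0 = inr e1 -> ia 1 = inr e2 ->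
  sat ia sa (FAll_kinds x.+2 f) <-> forall k u, valid k u -> sat (upd ia x.+2 u) sa (f k).
Proof.
move=> ia0 ia1; have gk k u : sat (upd ia x.+2 u) sa (guard k x.+2) <-> valid k u.
  by rewrite (@sat_guard (upd ia x.+2 u) sa k x.+2 ia0 ia1) /upd eqxx.
rewrite sat_FAnd_kinds; split=> [fk k u /gk | fk k u /gk]; exact: fk.
Qed.

Lemma ex_decode (P : kind -> univ G -> Prop) (Q : univ S -> Prop) :
  (forall k u, valid k u -> P k u <-> Q (decode k u)) ->
  (exists k u, valid k u /\ P k u) <-> exists u', Q u'.
Proof.
move=> PQ; split=> [[k [u [ku /(PQ _ _ ku) Qu]]]|[u' Qu']]; first by exists (decode k u).
exists (code u').1, (code u').2; split; first exact: valid_code.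
by apply/(PQ _ _ (valid_code u')); rewrite codeK.
Qed.

Lemma all_decode (P : kind -> univ G -> Prop) (Q : univ S -> Prop) :
  (forall k u, valid k u -> P k u <-> Q (decode k u)) ->
  (forall k u, valid k u -> P k u) <-> forall u', Q u'.
Proof.
move=> PQ; split=> [Pku u' | Qu k u ku]; last exact/(PQ _ _ ku).
by rewrite -(codeK u'); apply/(PQ _ _ (valid_code u'))/Pku/valid_code.
Qed.

Definition coded_set (X' : {set univ S}) (Xs : kind -> {set univ G}) : Prop :=
  forall k u, valid k u -> (u \in Xs k) = (decode k u \in X').

Definition encode_set (Xs : kind -> {set univ G}) : {set univ S} :=
  [set u' | (code u').2 \in Xs (code u').1].

Definition decode_set (X' : {set univ S}) (k : kind) : {set univ G} :=
  [set u | decode k u \in X'].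

Lemma coded_encode_set Xs : coded_set (encode_set Xs) Xs.
Proof. by move=> k u /decodeK ku; rewrite inE ku. Qed.

Lemma coded_decode_set X' : coded_set X' (decode_set X').
Proof. by move=> k u _; rewrite inE. Qed.

Lemma ex_coded_set (P : (kind -> {set univ G}) -> Prop) (Q : {set univ S} -> Prop) :
  (forall Xs X', coded_set X' Xs -> P Xs <-> Q X') ->
  (exists Xs, P Xs) <-> exists X', Q X'.
Proof.
move=> PQ; split=> [[Xs PXs] | [X' QX']].
  by exists (encode_set Xs); apply/(PQ _ _ (coded_encode_set Xs)).
by exists (decode_set X'); apply/(PQ _ _ (coded_decode_set X')).
Qed.

Lemma all_coded_set (P : (kind -> {set univ G}) -> Prop) (Q : {set univ S} -> Prop) :
  (forall Xs X', coded_set X' Xs -> P Xs <-> Q X') ->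
  (forall Xs, P Xs) <-> forall X', Q X'.
Proof.
move=> PQ; split=> [PXs X' | QX' Xs].
  exact/(PQ _ _ (coded_decode_set X')).
exact/(PQ _ _ (coded_encode_set Xs)).
Qed.

Definition simulates (ki : nat -> kind) (coded : nat -> bool)
    (ia : nat -> univ G) (sa : nat -> {set univ G})
    (ia' : nat -> univ S) (sa' : nat -> {set univ S}) (f : form) : Prop :=
  [/\ ia 0 = inr e1, ia 1 = inr e2, sa 0 = edge_set F,
      forall x, ifree x f -> valid (ki x) (ia x.+2) /\ decode (ki x) (ia x.+2) = ia' x &
      forall X, sfree X f ->
        if coded X then coded_set (sa' X) (fun k => sa (svar X k))
        else sa' X = edge_set (lift_edges e1 e2 F)].

Lemma simulates_split ki coded ia sa ia' sa' f g h :
  simulates ki coded ia sa ia' sa' f ->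
  (forall n, ifree n f = ifree n g || ifree n h) ->
  (forall n, sfree n f = sfree n g || sfree n h) ->
  simulates ki coded ia sa ia' sa' g /\ simulates ki coded ia sa ia' sa' h.
Proof.
move=> [? ? ? Hi Hs] fi fs.
by split; split=> // n Hn; [apply: Hi | apply: Hs | apply: Hi | apply: Hs];
  rewrite ?fi ?fs Hn ?orbT.
Qed.

Lemma simulates_upd_ind ki coded ia sa ia' sa' f g (x : nat) k u :
  simulates ki coded ia sa ia' sa' f -> valid k u ->
  (forall m, m != x -> ifree m g -> ifree m f) -> (forall X, sfree X g -> sfree X f) ->
  simulates (upd ki x k) coded (upd ia x.+2 u) sa (upd ia' x (decode k u)) sa' g.
Proof.
move=> [? ? ? Hi Hs] ku gf gfs; split=> // [m gm | X /gfs /Hs //].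
rewrite /upd !eqSS; case: eqP => [_ | /eqP mx]; first by split.
exact/Hi/gf.
Qed.

Lemma simulates_upd_set ki coded ia sa ia' sa' f g (X : nat) Xs X' :
  simulates ki coded ia sa ia' sa' f -> coded_set X' Xs ->
  (forall n, ifree n g -> ifree n f) -> (forall Y, Y != X -> sfree Y g -> sfree Y f) ->
  simulates ki (upd coded X true) ia (upd_kinds sa X Xs) ia' (upd sa' X X') g.
Proof.
move=> [? ? ? Hi Hs] cX gf gfs; split=> // [x /gf /Hi // | Y gY].
rewrite /upd; case: eqP => [-> k u ku | /eqP YX].
  by rewrite upd_kinds_svar eqxx; exact: cX.
have /Hs := gfs Y YX gY; case: (coded Y) => // cY k u ku.
by rewrite upd_kinds_svar (negbTE YX); exact: cY.
Qed.

Lemma sat_backtr f ki coded ia sa ia' sa' : simulates ki coded ia sa ia' sa' f ->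
  sat ia sa (backtr ki coded f) <-> sat ia' sa' f.
Proof.
elim: f ki coded ia sa ia' sa'
  => [x|x|x y|x X|x y|g IH|g IHg h IHh|g IHg h IHh|g IHg h IHh|x g IH|x g IH|X g IH|X g IH]
  ki coded ia sa ia' sa' sim; case: (sim) => ia0 ia1 sa0 Hi Hs.
- rewrite /=; have /Hi[Hx <-] : ifree x (FV x) by rewrite /= eqxx.
  exact: sat_atomV.
- rewrite /=; have /Hi[Hx <-] : ifree x (FE x) by rewrite /= eqxx.
  exact: sat_atomE.
- rewrite /=; have /Hi[Hx <-] : ifree x (FI x y) by rewrite /= eqxx.
  have /Hi[Hy <-] : ifree y (FI x y) by rewrite /= eqxx orbT.
  exact: sat_atomI.
- rewrite /=; have /Hi[Hx <-] : ifree x (FIn x X) by rewrite /= eqxx.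
  have /Hs : sfree X (FIn x X) by rewrite /= eqxx.
  by case: (coded X) => [cX | ->]; [rewrite /= (cX _ _ Hx) | apply: sat_atomY].
- rewrite /=; have /Hi[Hx <-] : ifree x (FEq x y) by rewrite /= eqxx.
  have /Hi[Hy <-] : ifree y (FEq x y) by rewrite /= eqxx orbT.
  exact: sat_atomEq.
- by rewrite /= (IH _ _ _ _ _ _ sim).
- have [Sg Sh] := simulates_split (g := g) (h := h) sim (fun=> erefl) (fun=> erefl).
  by rewrite /= (IHg _ _ _ _ _ _ Sg) (IHh _ _ _ _ _ _ Sh).
- have [Sg Sh] := simulates_split (g := g) (h := h) sim (fun=> erefl) (fun=> erefl).
  by rewrite /= (IHg _ _ _ _ _ _ Sg) (IHh _ _ _ _ _ _ Sh).
- have [Sg Sh] := simulates_split (g := g) (h := h) sim (fun=> erefl) (fun=> erefl).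
  by rewrite /= (IHg _ _ _ _ _ _ Sg) (IHh _ _ _ _ _ _ Sh).
- rewrite sat_FEx_kinds //; apply: ex_decode => k u ku; apply: IH.
  by apply: (simulates_upd_ind sim ku) => // m /= mx ->; rewrite eq_sym mx.
- rewrite sat_FAll_kinds //; apply: all_decode => k u ku; apply: IH.
  by apply: (simulates_upd_ind sim ku) => // m /= mx ->; rewrite eq_sym mx.
- rewrite sat_FExS_kinds; apply: ex_coded_set => Xs X' cX; apply: IH.
  by apply: (simulates_upd_set sim cX) => // Y /= YX ->; rewrite eq_sym YX.
- rewrite sat_FAllS_kinds; apply: all_coded_set => Xs X' cX; apply: IH.
  by apply: (simulates_upd_set sim cX) => // Y /= YX ->; rewrite eq_sym YX.
Qed.

End SpliceInterpretation.

Theorem lemma3p4 (phi : form) :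
  (forall n, ~~ ifree n phi) ->
  (forall n, sfree n phi -> n = 0) ->
  exists phis : form,
    (forall n, ifree n phis -> n = 0 \/ n = 1) /\
    (forall n, sfree n phis -> n = 0) /\
    forall (G : graph) (F : {set gE G}) (e1 e2 : gE G),
      e1 != e2 -> e1 \notin F -> e2 \notin F ->
      forall (ia : nat -> univ G) (sa : nat -> {set univ G})
             (ia' : nat -> univ (splice e1 e2))
             (sa' : nat -> {set univ (splice e1 e2)}),
        ia 0 = inr e1 -> ia 1 = inr e2 ->
        sa 0 = edge_set F ->
        sa' 0 = edge_set (lift_edges e1 e2 F) ->
        (sat ia sa phis <-> sat ia' sa' phi).
Proof.
move=> closed_phi free_phi.
exists (backtr (fun=> Old) (fun=> false) phi); split; [|split].
- move=> n /ifree_backtr[|phin]; first lia.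
  by move: (closed_phi n.-2); rewrite phin.
- by move=> n /sfree_backtr[|[X [k []]]].
-
  move=> G F e1 e2 _ _ _ ia sa ia' sa' ia0 ia1 sa0 sa'0; apply: (sat_backtr (F := F)).
  by split=> // [x | X /free_phi -> //]; rewrite (negbTE (closed_phi x)).
Qed.
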